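(* Let $t\ge1$ be an integer. The midpoint $Q$ of the edge of $P_t$ of slope $1$ has coordinates $(H_t,H_t/2)$; in particular the segment from the origin $O$ to $Q$ has slope $\tfrac12$. Moreover, $H_t$ is even if and only if $t$ is even.
   Context: Fix an integer $t\ge1$. Let $S_t$ be the set of rational numbers $s$ which, written in lowest terms as $s=a/b$ with $a\in\mathbb Z$ and $b$ a positive integer, satisfy $b\le t$. For $s=a/b\in S_t$ let $v_s=\lfloor t/b\rfloor\,(b,a)$, and $V_t=\{v_s:s\in S_t\}$. The grid parabola $P_t$ is the infinite convex polygonal chain obtained by concatenating the vectors of $V_t$ in order of increasing slope, positioned so that the edge given by $(t,0)$ goes from $(-t/2,0)$ to $(t/2,0)$. The horizontal period is $H_t=\sum_{(x,y)\in V_t,\ 0<y/x\le1} x=\sum_{1\le y\le x\le t,\ \gcd(x,y)=1}\lfloor t/x\rfloor\,x$. *)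

From mathcomp Require Import all_boot all_order all_algebra.
Set Implicit Arguments. Unset Strict Implicit. Unset Printing Implicit Defensive.
Import Order.TTheory GRing.Theory Num.Theory.
Local Open Scope ring_scope.

Definition inS (t : nat) (s : rat) : bool := (`|denq s| <= t)%N.

Definition vec (t : nat) (s : rat) : rat * rat :=
  let k := ((t %/ `|denq s|)%N)%:R : rat in
  (k * (denq s)%:~R, k * (numq s)%:~R).

(* Sum of v_r over r in S_t with lo <= r < hi (lo, hi given), for lo >= 0.
   Elements of S_t with 0 <= r are enumerated as a/b, 1 <= b <= t,
   a >= 0, coprime a b (the lowest-terms representation).  Since
   r < hi and b <= t we have a <= hi * t, so a < truncn (hi*t) + 1. *)
Definition sum_pos (t : nat) (lo hi : rat) : rat * rat :=
  let N := (Num.truncn (hi * t%:R)).+1 in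
  let P := fun (a b : nat) =>
     [&& (0 < b)%N, coprime a b, lo <= a%:R / b%:R & a%:R / b%:R < hi :> rat] in
  (\sum_(b < t.+1) \sum_(a < N | P a b) (vec t (a%:R / b%:R)).1,
   \sum_(b < t.+1) \sum_(a < N | P a b) (vec t (a%:R / b%:R)).2).

Definition sum_neg (t : nat) (lo : rat) : rat * rat :=
  let N := (Num.truncn ((- lo) * t%:R)).+1 in
  let P := fun (a b : nat) =>
     [&& (0 < b)%N, coprime a b, lo <= - (a%:R / b%:R) & - (a%:R / b%:R) < 0 :> rat] in
  (\sum_(b < t.+1) \sum_(a < N | P a b) (vec t (- (a%:R / b%:R))).1,
   \sum_(b < t.+1) \sum_(a < N | P a b) (vec t (- (a%:R / b%:R))).2).

(* Starting point of the edge of P_t of slope s (s in S_t): the vectors of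
   V_t are concatenated in increasing slope, the edge v_0 = (t,0) going
   from (-t/2,0) to (t/2,0). *)
Definition edge_start (t : nat) (s : rat) : rat * rat :=
  if 0 <= s then
    let S := sum_pos t 0 s in (- (t%:R) / 2 + S.1, S.2)
  else
    let S := sum_neg t s in (- (t%:R) / 2 - S.1, - S.2).

Definition edge_end (t : nat) (s : rat) : rat * rat :=
  ((edge_start t s).1 + (vec t s).1, (edge_start t s).2 + (vec t s).2).

Definition edge_midpoint (t : nat) (s : rat) : rat * rat :=
  (((edge_start t s).1 + (edge_end t s).1) / 2,
   ((edge_start t s).2 + (edge_end t s).2) / 2).

Definition Hper (t : nat) : nat :=
  \sum_(1 <= x < t.+1) \sum_(1 <= y < x.+1 | coprime x y) (t %/ x * x)%N.

From mathcomp Require Import all_boot all_order all_algebra.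
From mathcomp Require Import ring.
Import Order.TTheory GRing.Theory Num.Theory.
Local Open Scope ring_scope.

(* The edges of slope in [0, 1) are the v_(a/b) with 0 <= a < b <= t coprime, so
   the edge of slope 1 starts at (-t/2 + X, Y) with
   X = sum_b floor(t/b) b phi(b) = H_t and Y = sum_b floor(t/b) (sum of the residues
   a < b prime to b).  The involution a |-> b - a shows that the latter sum is
   b phi(b) / 2 for b > 1, hence H_t = t + 2Y.  Adding half of v_1 = (t, t) gives
   the midpoint (H_t, Y + t/2) = (H_t, H_t/2), and H_t = t + 2Y has the parity of t. *)

Lemma coprimeBl a b : (a <= b)%N -> coprime (b - a) b = coprime a b.
Proof.
move=> le_ab; rewrite /coprime.
by rewrite -{2}(subnK le_ab) gcdnDl -{2}(subnKC le_ab) gcdnDl gcdnC.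
Qed.

Lemma sum_coprime_const b c :
  (\sum_(0 <= a < b | coprime a b) c = c * totient b)%N.
Proof.
rewrite totient_count_coprime big_distrr big_mkcond /=.
by apply: eq_bigr => a _; rewrite coprime_sym; case: coprime; rewrite ?muln1 ?muln0.
Qed.

Lemma sum_coprime_residues b : (1 < b)%N ->
  (2 * \sum_(0 <= a < b | coprime a b) a = b * totient b)%N.
Proof.
move=> gt1_b; have gt0_b := ltnW gt1_b.
have coprime0 : coprime 0 b = false by rewrite /coprime gcd0n gtn_eqF.
rewrite -sum_coprime_const !(big_ltn_cond gt0_b) coprime0.
rewrite mul2n -addnn {2}(big_nat_rev _ _ 1 b) big_mkcond [X in (_ + X)%N]big_mkcond.
rewrite [RHS]big_mkcond -big_split /=.
apply: eq_big_nat => a /andP[_ lt_ab]; rewrite add1n subSS coprimeBl; last exact: ltnW.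
by case: coprime; rewrite /= ?subnKC // ltnW.
Qed.

Lemma Hper_totient t :
  Hper t = (\sum_(1 <= b < t.+1) t %/ b * b * totient b)%N.
Proof.
apply: eq_big_nat => b /andP[gt0_b _]; rewrite -sum_coprime_const.
rewrite big_mkcond [RHS]big_mkcond (big_nat_recr _ _ _ gt0_b) (big_ltn gt0_b) /= addnC.
have -> : coprime b b = coprime 0 b by rewrite /coprime gcdnn gcd0n.
by congr (_ + _)%N; apply: eq_big_nat => a _; rewrite coprime_sym.
Qed.

Lemma Hper_rise t : (0 < t)%N ->
  Hper t = (t + 2 * \sum_(1 <= b < t.+1) t %/ b * \sum_(0 <= a < b | coprime a b) a)%N.
Proof.
move=> gt0_t; rewrite Hper_totient big_ltn // [X in (_ = _ + 2 * X)%N]big_ltn //.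
have -> : (\sum_(0 <= a < 1 | coprime a 1) a = 0)%N by rewrite big_mkcond big_nat1.
rewrite muln0 add0n divn1 muln1 (_ : totient 1 = 1%N) // muln1 big_distrr.
congr (_ + _)%N; apply: eq_big_nat => b /andP[gt1_b _].
by rewrite /= mulnCA sum_coprime_residues // mulnA.
Qed.

Lemma vec_frac t a b : (0 < b)%N -> coprime a b ->
  vec t (a%:R / b%:R) = ((t %/ b * b)%N%:R, (t %/ b * a)%N%:R).
Proof.
move=> gt0_b co_ab.
have -> : (a%:R / b%:R : rat) = (a%:Z)%:~R / (b%:Z)%:~R by [].
rewrite /vec coprimeq_den ?coprimeq_num //.
rewrite eqz_nat gtn_eqF // gtr0_sg ?ltz_nat //.
by rewrite mul1r !natrM.
Qed.

Lemma sum_fractions_unit_interval t b (F : nat -> rat) : (0 < b)%N -> (b <= t)%N ->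
  \sum_(a < t.+1 | [&& (0 < b)%N, coprime a b, 0 <= a%:R / b%:R :> rat &
        a%:R / b%:R < 1 :> rat]) F a =
  \sum_(0 <= a < b | coprime a b) F a.
Proof.
move=> gt0_b le_bt; rewrite [RHS]big_mkord.
rewrite (big_ord_widen_cond t.+1 (fun a => coprime a b) F) ?leqW //.
apply: eq_bigl => a; rewrite gt0_b divr_ge0 ?ler0n //= ltr_pdivrMr ?ltr0n //.
by rewrite mul1r ltr_nat.
Qed.

Lemma sum_pos_unit_interval t : sum_pos t 0 1 =
  ((\sum_(1 <= b < t.+1) t %/ b * b * totient b)%N%:R,
   (\sum_(1 <= b < t.+1) t %/ b * \sum_(0 <= a < b | coprime a b) a)%N%:R).
Proof.
rewrite /sum_pos mul1r (_ : Num.truncn (t%:R : rat) = t); last first.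
  by apply: truncn_def; rewrite lexx ltr_nat ltnSn.
congr pair; rewrite natr_sum big_ord_recl big1 ?add0r; try by move=> a /andP[].
all: rewrite big_add1 big_mkord; apply: eq_bigr => b _; rewrite lift0.
- rewrite (@sum_fractions_unit_interval t b.+1 (fun a => (vec t (a%:R / b.+1%:R)).1)) //.
  rewrite -sum_coprime_const natr_sum; apply: eq_bigr => a co_ab.
  by rewrite vec_frac.
- rewrite (@sum_fractions_unit_interval t b.+1 (fun a => (vec t (a%:R / b.+1%:R)).2)) //.
  rewrite big_distrr natr_sum; apply: eq_bigr => a co_ab.
  by rewrite vec_frac.
Qed.

Lemma vec1 t : vec t 1 = (t%:R, t%:R).
Proof. by rewrite /vec /= divn1 mulr1. Qed.

Theorem proposition1 (t : nat) (ht : (1 <= t)%N) :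
  let Q := edge_midpoint t 1 in
  [/\ Q = ((Hper t)%:R, (Hper t)%:R / 2),
      Q.2 / Q.1 = 1 / 2
    & (~~ odd (Hper t)) = (~~ odd t)].
Proof.
have eH := Hper_rise t ht; set Y := (\sum_(1 <= b < t.+1) _)%N in eH.
have HQ : edge_midpoint t 1 = ((Hper t)%:R, (Hper t)%:R / 2).
  rewrite /edge_midpoint /edge_end /edge_start ler01 sum_pos_unit_interval.
  rewrite -Hper_totient -/Y vec1 eH natrD natrM /=.
  by congr pair; field.
move=> Q; rewrite /Q HQ; split => //=.
- by field; rewrite pnatr_eq0 -lt0n eH addn_gt0 ht.
- by rewrite eH oddD mul2n odd_double addbF.
Qed.
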